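(* For any $b,c\in\mathbb C\setminus\{-1,-2,-3,\dots\}$, with $f$ and $h$ as defined in the context, \[f(b,c)=\frac{c+1}{b+1}\cdot\frac{h(b)}{h(c)}.\]
   Context: Let $u_n=(-1)^{s_2(n)}$, where $s_2(n)$ is the sum of the binary digits of the non-negative integer $n$ (Thue–Morse sequence with values $\pm1$). For $b,c\in\mathbb C\setminus\{-1,-2,-3,\dots\}$ define $f(b,c)=\prod_{n=1}^\infty\left(\frac{n+b}{n+c}\right)^{u_n}$ (limit of partial products; this converges for all such $b,c$). Define $h(x)=f\left(\frac x2,\frac{x+1}{2}\right)=\prod_{n=1}^\infty\left(\frac{2n+x}{2n+1+x}\right)^{u_n}$ for $x\in\mathbb C\setminus\{-2,-3,-4,\dots\}$. *)

From HB Require Import structures.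
From mathcomp Require Import all_boot all_order all_algebra.
From mathcomp Require Import complex.
From mathcomp Require Import all_classical all_reals all_analysis.
Set Implicit Arguments. Unset Strict Implicit. Unset Printing Implicit Defensive.
Import Order.TTheory GRing.Theory Num.Theory.
Import numFieldTopology.Exports numFieldNormedType.Exports.
Local Open Scope ring_scope.
Local Open Scope complex_scope.

HB.instance Definition _ (R : rcfType) := NormedModule.copy R[i] R[i]^o.

(* s_2(n): sum of binary digits of n (bit i of n is (n %/ 2^i) %% 2; bits i >= n vanish). *)
Definition s2 (n : nat) : nat := (\sum_(i < n) ((n %/ 2 ^ i) %% 2))%N.

(* Thue–Morse sequence with values +-1, as an integer exponent. *)
Definition tm (n : nat) : int := (-1) ^+ s2 n.

Definition fpart (R : realType) (b c : R[i]) (N : nat) : R[i] :=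
  \prod_(1 <= n < N.+1) ((n%:R + b) / (n%:R + c)) ^ tm n.

Definition f (R : realType) (b c : R[i]) : R[i] := limn (fpart b c).

Definition h (R : realType) (x : R[i]) : R[i] := f (x / 2) ((x + 1) / 2).

Definition not_negint (R : realType) (x : R[i]) : Prop :=
  forall k : nat, x <> - (k.+1)%:R.

(* Pair the factors n = 2k and n = 2k+1 of f(b,c): as u_(2k) = u_k = -u_(2k+1),
   such a pair is [(2k+b)/(2k+b+1)]^(u_k) / [(2k+c)/(2k+c+1)]^(u_k), the quotient
   of the k-th factors of h(b) and h(c), while the lone factor n = 1 is
   (c+1)/(b+1).  Hence the partial products of f of odd length are (c+1)/(b+1)
   times a quotient of partial products of h, and those of even length differ
   from them by a factor tending to 1.  It remains to show that h(x) is a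
   convergent product with a nonzero value: pairing its own factors in the same
   way gives factors 1 + O(1/k^2), and a product of nonzero factors a_k with
   summable |a_k - 1| converges to a nonzero limit by the Cauchy criterion. *)

From HB Require Import structures.
From mathcomp Require Import all_boot all_order all_algebra.
From mathcomp Require Import complex.
From mathcomp Require Import all_classical all_reals all_analysis.
From mathcomp Require Import ring lra zify.
Import Order.TTheory GRing.Theory Num.Theory.
Import numFieldTopology.Exports numFieldNormedType.Exports.
Import ComplexField.Normc.
Local Open Scope ring_scope.
Local Open Scope complex_scope.
Local Open Scope classical_set_scope.

Lemma s2_widen n m : (n <= m)%N -> s2 n = (\sum_(0 <= i < m) (n %/ 2 ^ i %% 2))%N.
Proof.
move=> le_nm; rewrite /s2 -(big_mkord xpredT (fun i => (n %/ 2 ^ i %% 2)%N)).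
rewrite (big_cat_nat (leq0n n) le_nm) /=.
rewrite [X in _ = (_ + X)%N]big_nat_cond [X in _ = (_ + X)%N]big1 ?addn0 //.
move=> i /andP[/andP[le_ni _] _]; rewrite divn_small ?mod0n //.
by rewrite (leq_trans (ltn_expl n (isT : (1 < 2)%N))) // leq_pexp2l.
Qed.

Lemma s2_double n : s2 n.*2 = s2 n.
Proof.
rewrite (@s2_widen _ n.*2.+1) // big_nat_recl //= expn0 divn1 modn2 odd_double.
under eq_bigr => i _ do rewrite expnS divnMA divn2 doubleK.
by rewrite add0n -s2_widen // -addnn leq_addr.
Qed.

Lemma s2_doubleS n : s2 n.*2.+1 = (s2 n).+1.
Proof.
rewrite (@s2_widen _ n.*2.+2) // big_nat_recl //= expn0 divn1 modn2 /= odd_double.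
under eq_bigr => i _ do rewrite expnS divnMA divn2 /= uphalf_double.
by rewrite add1n -s2_widen // -addnn -addnS leq_addr.
Qed.

Lemma tm_double n : tm n.*2 = tm n.
Proof. by rewrite /tm s2_double. Qed.

Lemma tm_doubleS n : tm n.*2.+1 = - tm n.
Proof. by rewrite /tm s2_doubleS exprS mulN1r. Qed.

Lemma tm_sign n : tm n = 1 \/ tm n = -1.
Proof. by rewrite /tm -signr_odd; case: odd; [right | left]. Qed.

Lemma cvg_even_odd (T : topologicalType) (u : nat -> T) (l : T) :
  (fun k => u k.*2) @ \oo --> l -> (fun k => u k.*2.+1) @ \oo --> l -> u @ \oo --> l.
Proof.
move=> u_even u_odd A /[dup] /u_even[N1 _ uA1] /u_odd[N2 _ uA2].
exists (maxn N1 N2).*2 => // n /= le_Nn; rewrite -[n]odd_double_half.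
by case: odd; [apply: uA2 | apply: uA1]; rewrite /=; lia.
Qed.

Lemma cvg_from_odd_subseq (K : numFieldType) (u r : nat -> K) (l : K) :
  (forall k, u k.*2.+2 = u k.*2.+1 * r k.*2.+2) -> r @ \oo --> (1 : K) ->
  (fun k => u k.*2.+1) @ \oo --> l -> u @ \oo --> l.
Proof.
move=> u_even r1 u_odd; rewrite -cvg_shiftS; apply: cvg_even_odd => //=.
under eq_fun do rewrite u_even; rewrite -[l]mulr1; apply: cvgM => //.
apply: cvg_comp r1; apply/cvgnyPge => A; exists A => // k /= le_Ak; lia.
Qed.

Section ComplexLimits.
Context {R : realType}.
Local Notation C := R[i].
Implicit Types x y : C.

Lemma normc_ge0 x : 0 <= normc x.
Proof. by case: x => a b; apply: sqrtr_ge0. Qed.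

Lemma normc_gt0 x : (0 < normc x) = (x != 0).
Proof.
rewrite lt_def normc_ge0 andbT; congr (~~ _).
by apply/eqP/eqP => [/eq0_normc | ->] //; apply: normc0.
Qed.

Lemma normc_natr n : normc (n%:R : C) = n%:R.
Proof. by rewrite normcMn normc1. Qed.

(* [le_normcD] is stated on [Rcomplex R], whose addition does not match that of
   [R[i]] syntactically, so rewriting with it fails on [R[i]] terms. *)
Lemma ler_normcD x y : normc (x + y) <= normc x + normc y.
Proof. exact: le_normcD. Qed.

Lemma lerB_normcD x y : normc x - normc y <= normc (x + y).
Proof. by rewrite lerBlDr; have := le_normcD (x + y) (- y); rewrite normcN addrK. Qed.

Lemma normc_distrC x y : normc (x - y) = normc (y - x).
Proof. by rewrite -normcN opprB. Qed.

Lemma ler_Re_normc x : `|complex.Re x| <= normc x.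
Proof.
case: x => a b; rewrite /= -sqrtr_sqr ler_sqrt ?addr_ge0 ?sqr_ge0 //.
by rewrite lerDl sqr_ge0.
Qed.

Lemma ler_Im_normc x : `|complex.Im x| <= normc x.
Proof.
case: x => a b; rewrite /= -sqrtr_sqr ler_sqrt ?addr_ge0 ?sqr_ge0 //.
by rewrite lerDr sqr_ge0.
Qed.

Lemma normc_le_ReIm x : normc x <= `|complex.Re x| + `|complex.Im x|.
Proof.
case: x => a b; rewrite /= -[X in _ <= X]ger0_norm ?addr_ge0 //.
rewrite -sqrtr_sqr ler_sqrt ?sqr_ge0 // sqrrD !real_normK ?num_real //.
by rewrite lerD2r lerDl mulrn_wge0 ?mulr_ge0.
Qed.

Lemma cvgC_normcP (u : nat -> C) (l : C) : u @ \oo --> l <->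
  forall e : R, 0 < e -> exists N, forall n, (N <= n)%N -> normc (u n - l) < e.
Proof.
split=> [/cvgrPdist_lt u_l e e0 | u_l].
  have [N _ uN] := u_l e%:C ltac:(by rewrite ltcR).
  by exists N => n /uN /=; rewrite normc_distrC -ltcR.
apply/cvgrPdist_lt => -[a b]; rewrite ltcE /= => /andP[/eqP -> a0].
have [N uN] := u_l a a0; exists N => // n /uN.
by rewrite -ltcR normc_distrC.
Qed.

Lemma cauchy_cvgC (u : nat -> C) :
  (forall e : R, 0 < e -> exists N, forall n m, (N <= n)%N -> (N <= m)%N ->
     normc (u n - u m) < e) ->
  exists l : C, u @ \oo --> l.
Proof.
move=> u_cauchy.
have proj_cvg (p : C -> R) : (forall z w, `|p z - p w| <= normc (z - w)) ->
    exists lp, forall e : R, 0 < e -> exists N, forall n, (N <= n)%N -> `|p (u n) - lp| < e.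
  move=> p_le; have /cvg_ex[lp /cvgrPdist_lt p_lp] : cvgn (p \o u).
    apply: cauchy_cvg; apply: cauchy_exP => e e0.
    have [N uN] := u_cauchy e e0; exists (p (u N)); exists N => // m le_Nm.
    exact: le_lt_trans (p_le _ _) (uN _ _ (leqnn N) le_Nm).
  exists lp => e e0; have [N _ pN] := p_lp e e0.
  by exists N => n /pN /=; rewrite distrC.
have [lr Re_l] : exists lr, forall e : R, 0 < e ->
    exists N, forall n, (N <= n)%N -> `|complex.Re (u n) - lr| < e.
  by apply: proj_cvg => -[a b] [c d]; apply: (ler_Re_normc ((a - c) +i* (b - d))).
have [li Im_l] : exists li, forall e : R, 0 < e ->
    exists N, forall n, (N <= n)%N -> `|complex.Im (u n) - li| < e.
  by apply: proj_cvg => -[a b] [c d]; apply: (ler_Im_normc ((a - c) +i* (b - d))).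
exists (lr +i* li); apply/cvgC_normcP => e e0.
have [N1 ReN] := Re_l (e / 2) (divr_gt0 e0 (ltr0Sn _ 1)).
have [N2 ImN] := Im_l (e / 2) (divr_gt0 e0 (ltr0Sn _ 1)).
exists (maxn N1 N2) => n; rewrite geq_max => /andP[/ReN Re_lt /ImN Im_lt].
apply: le_lt_trans (normc_le_ReIm _) _.
by move: Re_lt Im_lt; case: (u n) => a b /=; lra.
Qed.

Lemma cvgC_neq0 (u : nat -> C) (l : C) (r : R) : u @ \oo --> l -> 0 < r ->
  (exists N, forall n, (N <= n)%N -> r <= normc (u n)) -> l != 0.
Proof.
move=> /cvgC_normcP u_l r_gt0 [N1 u_ge]; have [N2 u_near] := u_l r r_gt0.
have := u_ge _ (leq_maxl N1 N2); have := u_near _ (leq_maxr N1 N2).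
by have := ler_normcD (u (maxn N1 N2) - l) l; rewrite subrK -normc_gt0; lra.
Qed.

Lemma normc_prod_sub1_le (a : nat -> C) n m :
  \sum_(n <= k < m) normc (a k - 1) <= 2^-1 ->
  normc (\prod_(n <= k < m) a k - 1) <= 2 * \sum_(n <= k < m) normc (a k - 1).
Proof.
elim: m => [|m IH] le_sum; first by rewrite !big_geq // subrr normc0 mulr0.
have [le_nm | lt_mn] := leqP n m; last by rewrite !big_geq // subrr normc0 mulr0.
rewrite !big_nat_recr //= in le_sum *.
set S := \sum_(n <= k < m) _ in le_sum IH *; set t := normc (a m - 1) in le_sum *.
set Q := \prod_(n <= k < m) a k in IH *.
have t_ge0 : 0 <= t := normc_ge0 _.
have S_ge0 : 0 <= S by apply: sumr_ge0 => k _; apply: normc_ge0.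
have Q_near1 : normc (Q - 1) <= 2 * S by apply: IH; lra.
have am_le : normc (a m) <= 1 + t.
  by have := ler_normcD 1 (a m - 1); rewrite addrC subrK normc1.
have -> : Q * a m - 1 = (Q - 1) * a m + (a m - 1) by ring.
apply: le_trans (ler_normcD _ _) _; rewrite normcM.
have : normc (Q - 1) * normc (a m) <= 2 * S * (1 + t) by rewrite ler_pM ?normc_ge0.
rewrite -/t => prod_le.
have : S * t <= 2^-1 * t by apply: ler_wpM2r => //; lra.
lra.
Qed.

Definition tails_vanish (t : nat -> R) := forall e : R, 0 < e ->
  exists N, forall n m, (N <= n)%N -> \sum_(n <= k < m) t k <= e.

Lemma tails_vanish_le_inv_sq (t : nat -> R) (c : R) (K : nat) : 0 <= c ->
  (forall k, (K <= k)%N -> t k <= c / (k%:R * (k%:R + 1))) -> tails_vanish t.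
Proof.
move=> c_ge0 t_le e e0.
exists (maxn K (Num.truncn (c / e)).+1) => n m; rewrite geq_max => /andP[le_Kn lt_n].
have n_gt0 : (0 < n)%N := leq_trans (ltn0Sn _) lt_n.
have [le_nm | lt_mn] := leqP n m; last first.
  by rewrite big_geq; [apply: ltW | apply: ltnW].
have tele : \sum_(n <= k < m) c / (k%:R * (k%:R + 1)) = c / n%:R - c / m%:R.
  rewrite (telescope_sumr_eq (fun k : nat => - (c / k%:R)) _ le_nm).
    by rewrite opprK addrC.
  move=> k /andP[le_nk _].
  have k_gt0 : (0 < k)%N := leq_trans n_gt0 le_nk.
  by rewrite -natr1; field; rewrite natr1 !pnatr_eq0 -lt0n k_gt0.
apply: le_trans (_ : \sum_(n <= k < m) c / (k%:R * (k%:R + 1)) <= e).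
  by apply: ler_sum_nat => k /andP[le_nk _]; apply: t_le (leq_trans le_Kn le_nk).
have cm_ge0 : 0 <= c / m%:R by rewrite divr_ge0.
have : c / e < n%:R by apply: lt_le_trans (truncnS_gt _) _; rewrite ler_nat.
rewrite tele ltr_pdivrMr // => lt_c.
have : c / n%:R <= e by rewrite ler_pdivrMr ?ltr0n // mulrC ltW.
lra.
Qed.

Lemma prod_cvg_neq0 (a : nat -> C) :
  (forall k, a k != 0) -> tails_vanish (fun k => normc (a k - 1)) ->
  exists2 l, l != 0 & (fun n => \prod_(0 <= k < n) a k) @ \oo --> l.
Proof.
move=> a_neq0 tails.
pose P n := \prod_(0 <= k < n) a k.
have P_split n m : (n <= m)%N -> P m = P n * \prod_(n <= k < m) a k.
  by move=> le_nm; rewrite /P -big_cat_nat.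
have [N0 tail_N0] := tails 4^-1 ltac:(by rewrite invr_gt0).
have Q_le n m : (N0 <= n)%N ->
    normc (\prod_(n <= k < m) a k - 1) <= 2 * \sum_(n <= k < m) normc (a k - 1).
  by move=> N0n; apply: normc_prod_sub1_le; have := tail_N0 n m N0n; lra.
pose p0 := normc (P N0).
have p0_gt0 : 0 < p0.
  by rewrite normc_gt0 prodf_seq_neq0; apply/allP => k _; apply: a_neq0.
have P_bounds n : (N0 <= n)%N -> p0 / 2 <= normc (P n) <= 3 / 2 * p0.
  move=> le_N0n; rewrite (P_split _ _ le_N0n) normcM -/p0.
  set Q := \prod_(N0 <= k < n) a k.
  have : normc (Q - 1) <= 2^-1.
    by have := Q_le _ n (leqnn N0); have := tail_N0 _ n (leqnn N0); lra.
  have := ler_normcD (Q - 1) 1; have := lerB_normcD 1 (Q - 1).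
  rewrite subrK (addrC 1 (Q - 1)) subrK normc1 => Q_ge Q_le1 Q_near1.
  by apply/andP; split; nra.
have [l P_l] : exists l : C, P @ \oo --> l.
  apply: cauchy_cvgC => e e0.
  have [N1 tail_N1] := tails (e / (4 * p0)) ltac:(by rewrite divr_gt0 // mulr_gt0).
  exists (maxn N0 N1) => n m.
  wlog le_nm : n m / (n <= m)%N.
    move=> wlog_nm Nn Nm; have [le_nm | /ltnW le_mn] := leqP n m; first exact: wlog_nm.
    by rewrite normc_distrC; apply: wlog_nm.
  rewrite !geq_max => /andP[N0n N1n] _.
  rewrite (P_split n m le_nm) -[X in X - _]mulr1 -mulrBr normcM normc_distrC.
  have /andP[_ Pn_le] := P_bounds n N0n.
  have Q_small : normc (\prod_(n <= k < m) a k - 1) <= 2 * (e / (4 * p0)).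
    by apply: le_trans (Q_le _ _ N0n) _; rewrite ler_pM2l // tail_N1.
  apply: le_lt_trans (ler_pM (normc_ge0 _) (normc_ge0 _) Pn_le Q_small) _.
  have -> : 3 / 2 * p0 * (2 * (e / (4 * p0))) = 3 / 4 * e by field; rewrite gt_eqF.
  lra.
exists l => //; apply: (cvgC_neq0 _ _ (p0 / 2) P_l); first by rewrite divr_gt0.
by exists N0 => n /P_bounds /andP[].
Qed.

End ComplexLimits.

Section ThueMorseFactors.
Context {R : realType}.
Local Notation C := R[i].
Implicit Types b c x y : C.

Definition tm_factor b c (n : nat) : C := ((n%:R + b) / (n%:R + c)) ^ tm n.

Definition hfactor x (k : nat) : C := tm_factor x (x + 1) k.*2.

Definition hpart x (M : nat) : C := \prod_(1 <= k < M.+1) hfactor x k.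

Definition hpair x (i : nat) : C :=
  if i is _.+1 then hfactor x i.*2 * hfactor x i.*2.+1 else hfactor x 1.

Lemma hpartS x M : hpart x M.+1 = hpart x M * hfactor x M.+1.
Proof. by rewrite /hpart big_nat_recr. Qed.

Lemma fpart_half x N : fpart (x / 2) ((x + 1) / 2) N = hpart x N.
Proof.
apply: eq_bigr => k _; rewrite /hfactor /tm_factor tm_double; congr (_ ^ _).
have half n y : n%:R + y / 2 = ((n.*2)%:R + y) / 2 :> C.
  by rewrite -muln2 natrM; field.
by rewrite !half invf_div mulrA divfK // pnatr_eq0.
Qed.

Lemma tm_factor_pair b c k :
  tm_factor b c k.*2 * tm_factor b c k.*2.+1 = hfactor b k / hfactor c k.
Proof.
rewrite /hfactor /tm_factor tm_double tm_doubleS -natr1 -!(addrA (k.*2)%:R 1).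
rewrite (addrC 1 b) (addrC 1 c).
by case: (tm_sign k) => ->; rewrite ?opprK ?expr1z ?exprN1 !invf_div; ring.
Qed.

Lemma fpart_odd b c M :
  fpart b c M.*2.+1 = (c + 1) / (b + 1) * (hpart b M / hpart c M).
Proof.
elim: M => [|M IH].
  have tm1 : tm 1 = -1 by rewrite (tm_doubleS 0) /tm /s2 big_ord0.
  rewrite /fpart /hpart big_nat1 !big_geq // tm1 exprN1 invf_div.
  by rewrite invr1 !mulr1 (addrC c) (addrC b).
rewrite /fpart doubleS big_nat_recr // big_nat_recr //= -/(fpart b c M.*2.+1) IH.
rewrite -/(tm_factor b c M.+1.*2) -/(tm_factor b c M.+1.*2.+1) -mulrA tm_factor_pair.
by rewrite !hpartS invfM; ring.
Qed.

Lemma hpart_odd x j : hpart x j.*2.+1 = \prod_(0 <= i < j.+1) hpair x i.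
Proof.
elim: j => [|j IH]; first by rewrite /hpart !big_nat1.
by rewrite big_nat_recr //= -IH doubleS (hpartS x j.*2.+2) (hpartS x j.*2.+1) -mulrA.
Qed.

Lemma not_negint_natrD x n : not_negint x -> (0 < n)%N -> n%:R + x != 0.
Proof.
case: n => // n hx _; apply/eqP => /(canRL (addKr _)); rewrite addr0.
exact: hx.
Qed.

Lemma tm_factor_neq0 b c n : n%:R + b != 0 -> n%:R + c != 0 -> tm_factor b c n != 0.
Proof.
move=> b0 c0; have bc0 : (n%:R + b) / (n%:R + c) != 0 by rewrite mulf_neq0 ?invr_eq0.
by rewrite /tm_factor; case: (tm_sign n) => ->; rewrite ?expr1z ?exprN1 ?invr_eq0.
Qed.

Lemma hfactor_neq0 x k : not_negint x -> (0 < k)%N -> hfactor x k != 0.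
Proof.
move=> hx k_gt0; apply: tm_factor_neq0; first by rewrite not_negint_natrD ?double_gt0.
by rewrite addrA addrAC natr1 not_negint_natrD.
Qed.

Lemma hpair_neq0 x i : not_negint x -> hpair x i != 0.
Proof.
by case: i => [|i] hx /=; rewrite ?mulf_neq0 ?hfactor_neq0 // ?double_gt0.
Qed.

Lemma cvg_natrD_ratio1 b c : (fun n => (n%:R + b) / (n%:R + c)) @ \oo --> (1 : C).
Proof.
apply/cvgC_normcP => e e0; set D := normc (b - c).
exists (Num.truncn (normc c + D / e)).+1 => n lt_n.
have lt_cn : normc c + D / e < n%:R.
  by apply: lt_le_trans (truncnS_gt _) _; rewrite ler_nat.
have De_ge0 : 0 <= D / e by rewrite divr_ge0 ?normc_ge0 ?ltW.
have lt_De : D / e < normc (n%:R + c) by have := lerB_normcD n%:R c; rewrite normc_natr; lra.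
have nc_gt0 : 0 < normc (n%:R + c) by lra.
have -> : (n%:R + b) / (n%:R + c) - 1 = (b - c) / (n%:R + c).
  by field; rewrite -normc_gt0.
by rewrite normcM normcV -/D ltr_pdivrMr // mulrC -ltr_pdivrMr.
Qed.

Lemma tm_factor_cvg1 b c : tm_factor b c @ \oo --> (1 : C).
Proof.
apply/cvgC_normcP => e e0.
have [N1 bc] := (cvgC_normcP _ _).1 (cvg_natrD_ratio1 b c) e e0.
have [N2 cb] := (cvgC_normcP _ _).1 (cvg_natrD_ratio1 c b) e e0.
exists (maxn N1 N2) => n; rewrite geq_max => /andP[/bc bc_lt /cb cb_lt].
by rewrite /tm_factor; case: (tm_sign n) => ->; rewrite ?expr1z ?exprN1 ?invf_div.
Qed.

Lemma hfactor_cvg1 x : hfactor x @ \oo --> (1 : C).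
Proof.
apply: cvg_comp (tm_factor_cvg1 x (x + 1)).
by apply/cvgnyPge => A; exists A => // k /= le_Ak; lia.
Qed.

Lemma hpair_sub1_le x K : normc x + 2 <= K%:R ->
  normc (hpair x K - 1) <= 2 / (K%:R * (K%:R + 1)).
Proof.
case: K => [|K] le_xK; first by have := normc_ge0 x; lra.
set k := K.+1%:R in le_xK *; set y := ((K.+1).*2.*2)%:R + x.
have -> : hpair x K.+1 = (y / (y + 1)) ^ tm K.+1 * ((y + 2) / (y + 3)) ^ (- tm K.+1).
  have E : ((K.+1).*2.+1).*2%:R = ((K.+1).*2.*2)%:R + 2 :> C.
    by rewrite doubleS -addn2 natrD.
  rewrite /hpair /hfactor /tm_factor !tm_double tm_doubleS E -/y.
  have -> : ((K.+1).*2.*2)%:R + (x + 1) = y + 1 by rewrite addrA.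
  have -> : ((K.+1).*2.*2)%:R + 2 + x = y + 2 by rewrite addrAC.
  by have -> : ((K.+1).*2.*2)%:R + 2 + (x + 1) = y + 3 by rewrite /y; ring.
have y_ge w : normc w <= 3 -> k + 1 <= normc (y + w).
  have yk : ((K.+1).*2.*2)%:R = 4 * k :> R by rewrite /k -!muln2 !natrM; ring.
  move=> w_le; have := lerB_normcD ((K.+1).*2.*2)%:R (x + w).
  have := ler_normcD x w; rewrite normc_natr yk addrA -/y.
  have : 1 <= k by rewrite /k ler1n.
  lra.
have y_neq0 w : normc w <= 3 -> y + w != 0.
  move=> /y_ge; rewrite -normc_gt0; have : 0 <= k by apply: ler0n.
  lra.
have inv_le v w : normc v <= 3 -> normc w <= 3 ->
    normc (2 / ((y + v) * (y + w))) <= 2 / (k * (k + 1)).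
  move=> /y_ge v_ge /y_ge w_ge; have k_ge1 : 1 <= k by rewrite /k ler1n.
  rewrite normcM normcV normcM normc_natr ler_pM2l // lef_pV2 ?posrE;
    [|nra|apply: mulr_gt0; lra].
  by apply: ler_pM; lra.
have y0 : y != 0 by rewrite -[y]addr0 y_neq0 // normc0.
have le3 n : (n <= 3)%N -> normc (n%:R : C) <= 3 by rewrite normc_natr ler_nat.
case: (tm_sign K.+1) => ->; rewrite ?opprK ?expr1z ?exprN1.
- rewrite normc_distrC.
  have -> : 1 - y / (y + 1) * ((y + 2) / (y + 3))^-1 = 2 / ((y + 1) * (y + 2)).
    by field; rewrite ?y0 !y_neq0 ?normc1 ?le3 //; lra.
  by apply: inv_le; rewrite ?normc1 ?le3 //; lra.
- have -> : (y / (y + 1))^-1 * ((y + 2) / (y + 3)) - 1 = 2 / ((y + 0) * (y + 3)).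
    by rewrite addr0; field; rewrite ?y0 !y_neq0 ?normc1 ?le3 //; lra.
  by apply: inv_le; rewrite ?normc0 ?le3 //; lra.
Qed.

Lemma hpart_cvg x : not_negint x -> exists2 L, L != 0 & hpart x @ \oo --> L.
Proof.
move=> hx.
have tails : tails_vanish (fun i => normc (hpair x i - 1)).
  apply: (@tails_vanish_le_inv_sq _ _ 2 (Num.truncn (normc x + 2)).+1) => // i lt_i.
  by apply: hpair_sub1_le; apply/ltW/(lt_le_trans (truncnS_gt _)); rewrite ler_nat.
have [L L_neq0 pairs_L] := prod_cvg_neq0 _ (fun i => hpair_neq0 x i hx) tails.
exists L => //; apply: (@cvg_from_odd_subseq _ _ (hfactor x)) (hfactor_cvg1 x) _ => [k|].
  exact: hpartS.
under eq_fun do rewrite hpart_odd.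
by rewrite -cvg_shiftS in pairs_L.
Qed.

Lemma h_lim_hpart x : h x = limn (hpart x).
Proof. by rewrite /h /f (funext (fpart_half x)). Qed.

End ThueMorseFactors.

Theorem lemma3 (R : realType) (b c : R[i]) (hb : not_negint b) (hc : not_negint c) :
  f b c = (c + 1) / (b + 1) * (h b / h c).
Proof.
have [Lb Lb_neq0 hb_Lb] := hpart_cvg b hb.
have [Lc Lc_neq0 hc_Lc] := hpart_cvg c hc.
rewrite !h_lim_hpart (cvg_lim (@norm_hausdorff _ _) hb_Lb).
rewrite (cvg_lim (@norm_hausdorff _ _) hc_Lc); apply: (cvg_lim (@norm_hausdorff _ _)).
apply: (@cvg_from_odd_subseq _ _ (tm_factor b c)) (tm_factor_cvg1 b c) _ => [k|].
  by rewrite [LHS]/fpart big_nat_recr.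
rewrite (funext (fun k => fpart_odd b c k)).
exact: cvgM (cvg_cst _) (cvgM hb_Lb (cvgV Lc_neq0 hc_Lc)).
Qed.
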